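(* For any $n\ge 1$, the Hochschild lattice $(\mathsf{Tr}(n),\preccurlyeq)$ is extremal.
   Context: A triword of size $n$ is a word $u=u_1\cdots u_n$ with $u_i\in\{0,1,2\}$, $u_1\ne 2$, and such that $u_i=0$ implies $u_j\neq 1$ for all $j>i$; $\mathsf{Tr}(n)$ is their set, ordered componentwise ($u\preccurlyeq v$ iff $u_i\le v_i$ for all $i$); it is a lattice. An element of a finite lattice is join-irreducible (resp. meet-irreducible) if it covers (resp. is covered by) exactly one element. A finite lattice is extremal if the length $k$ of a longest saturated chain from its minimum to its maximum equals both the number of join-irreducible elements and the number of meet-irreducible elements. *)

From mathcomp Require Import all_boot.
Set Implicit Arguments. Unset Strict Implicit. Unset Printing Implicit Defensive.

(** Words of size n over {0,1,2}; positions are 0-based ('I_n), so the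
    paper's u_1 is the letter at the position i with val i = 0. *)
Definition word (n : nat) := {ffun 'I_n -> 'I_3}.

Definition triword (n : nat) (u : word n) : bool :=
  [forall i : 'I_n, (val i == 0) ==> (val (u i) != 2)] &&
  [forall i : 'I_n, forall j : 'I_n,
     ((i < j) && (val (u i) == 0)) ==> (val (u j) != 1)].

Definition Tr (n : nat) : {set word n} := [set u | triword u].

Definition wle (n : nat) : rel (word n) :=
  fun u v => [forall i : 'I_n, val (u i) <= val (v i)].

Section FinPoset.
Variables (T : finType) (S : {set T}) (le : rel T).

Definition is_partial_order : Prop :=
  (forall x, x \in S -> le x x) /\
  (forall x y, x \in S -> y \in S -> le x y -> le y x -> x = y) /\
  (forall x y z, x \in S -> y \in S -> z \in S -> le x y -> le y z -> le x z).

Definition is_join (x y j : T) : Prop :=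
  [/\ j \in S, le x j, le y j &
      forall z, z \in S -> le x z -> le y z -> le j z].

Definition is_meet (x y m : T) : Prop :=
  [/\ m \in S, le m x, le m y &
      forall z, z \in S -> le z x -> le z y -> le z m].

Definition is_finite_lattice : Prop :=
  [/\ is_partial_order, S != set0,
      forall x y, x \in S -> y \in S -> exists j, is_join x y j &
      forall x y, x \in S -> y \in S -> exists m, is_meet x y m].

Definition covers (y x : T) : bool :=
  [&& x \in S, y \in S, le x y, x != y &
      [forall z, ~~ [&& z \in S, le x z, le z y, z != x & z != y]]].

Definition join_irreducible (x : T) : bool :=
  (x \in S) && (#|[set y | covers x y]| == 1).

Definition meet_irreducible (x : T) : bool :=
  (x \in S) && (#|[set y | covers y x]| == 1).

Definition is_min (b : T) : Prop := b \in S /\ forall x, x \in S -> le b x.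
Definition is_max (t : T) : Prop := t \in S /\ forall x, x \in S -> le x t.

(** A saturated chain from b to t of length k: b = x_0 < x_1 < ... < x_k = t,
    each step a cover; encoded as the sequence [x_1; ...; x_k]. *)
Definition sat_chain (b t : T) (s : seq T) : bool :=
  path (fun x y => covers y x) b s && (last b s == t).

Definition longest_chain_length (k : nat) : Prop :=
  exists b t, [/\ is_min b, is_max t,
    (exists s, sat_chain b t s /\ size s = k) &
    (forall s, sat_chain b t s -> size s <= k)].

Definition extremal : Prop :=
  is_finite_lattice /\
  exists k, [/\ longest_chain_length k,
                #|[set x | join_irreducible x]| = k &
                #|[set x | meet_irreducible x]| = k].
End FinPoset.

From mathcomp Require Import all_boot zify.
Set Implicit Arguments. Unset Strict Implicit. Unset Printing Implicit Defensive.

(** Tr(n) contains 0^n and is closed under the componentwise maximum, so it is a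
    lattice. The letter sum is a strictly monotone rank that increases by one at
    each step of a chain from 0^n to 12^(n-1) raising one letter at a time, so the
    longest chain has length 2n-1. A triword with two positions whose letter can
    be lowered (raised) inside Tr(n) is the join (meet) of the two resulting
    words, hence not join- (meet-) irreducible. The triwords left over are
    0^k 2 0^(n-k-1) with k >= 1 and 1^k 0^(n-k) with k >= 1 (respectively,
    12^(n-1) with one letter replaced by 0 or 1, other than the first by 1): in
    each case 2n-1 words, each with a unique lower (upper) cover. *)

Section FinitePosets.
Variables (T : finType) (S : {set T}) (le : rel T).

Lemma covers_le_neq y x : covers S le y x ->
  [/\ x \in S, y \in S, le x y & x != y].
Proof. by case/and5P. Qed.

Section StrictlyMonotoneWeight.
Variable w : T -> nat.
Hypothesis w_lt : forall x y, le x y -> x != y -> w x < w y.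

Lemma sat_chain_size_le b t s : sat_chain S le b t s -> w b + size s <= w t.
Proof.
case/andP=> + /eqP <-; elim: s b => [|y s IHs] b /=; first by rewrite addn0.
case/andP=> /covers_le_neq[_ _ le_by ne_by] /IHs; have := w_lt le_by ne_by; lia.
Qed.

Lemma covers_of_weight_succ x y :
  x \in S -> y \in S -> le x y -> w y = (w x).+1 -> covers S le y x.
Proof.
move=> Sx Sy le_xy wy.
have ne_xy : x != y by apply: contra_eqN wy => /eqP->; lia.
rewrite /covers Sx Sy le_xy ne_xy; apply/forallP=> z.
apply/negP=> /and5P[_ le_xz le_zy ne_zx ne_zy].
move: (w_lt le_xz) (w_lt le_zy); rewrite eq_sym ne_zx ne_zy wy; lia.
Qed.

End StrictlyMonotoneWeight.

Hypotheses (le_refl : reflexive le) (le_anti : antisymmetric le)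
  (le_trans : transitive le).

Lemma rel_partial_order : is_partial_order S le.
Proof.
split=> [x _|]; first exact: le_refl.
split=> [x y _ _ le_xy le_yx|x y z _ _ _]; first by apply: le_anti; rewrite le_xy.
exact: le_trans.
Qed.

(* Every finite poset is ranked by the size of principal down-sets. *)
Let down x := [set z in S | le z x].

Lemma down_lt x y : y \in S -> le x y -> x != y -> #|down x| < #|down y|.
Proof.
move=> Sy le_xy ne_xy; apply/proper_card/properP; split.
  by apply/subsetP=> z; rewrite !inE => /andP[-> /le_trans->].
exists y; first by rewrite inE Sy le_refl.
by rewrite inE Sy /=; apply: contra ne_xy => le_yx; rewrite (@le_anti x y) ?le_xy.
Qed.

Lemma exists_lower_cover x y :
  x \in S -> y \in S -> le y x -> y != x -> exists2 z, covers S le x z & le y z.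
Proof.
move=> Sx Sy le_yx ne_yx.
pose below z := [&& z \in S, le y z, le z x & z != x].
have below_y : below y by rewrite /below Sy le_refl le_yx ne_yx.
have [z /and4P[Sz le_yz le_zx ne_zx] z_max] := arg_maxnP (fun z => #|down z|) below_y.
exists z => //; rewrite /covers Sz Sx le_zx ne_zx; apply/forallP=> t.
apply/negP=> /and5P[St le_zt le_tx ne_tz ne_tx].
move: (z_max t); rewrite /below St (le_trans le_yz le_zt) le_tx ne_tx => /= /(_ isT).
by rewrite leqNgt down_lt // eq_sym.
Qed.

Lemma join_irreducible_of_max_below x c :
  x \in S -> c \in S -> le c x -> c != x ->
  (forall y, y \in S -> le y x -> y != x -> le y c) ->
  join_irreducible S le x.
Proof.
move=> Sx Sc le_cx ne_cx c_max; rewrite /join_irreducible Sx.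
suff -> : [set y | covers S le x y] = [set c] by rewrite cards1.
apply/setP=> y; rewrite !inE; apply/idP/eqP=> [cov_xy|->].
  have /and5P[Sy _ le_yx ne_yx /forallP /(_ c)] := cov_xy.
  by rewrite Sc c_max // le_cx ne_cx andbT /= negbK => /eqP.
rewrite /covers Sc Sx le_cx ne_cx; apply/forallP=> z.
apply/negP=> /and5P[Sz le_cz le_zx ne_zc ne_zx].
by move: ne_zc; rewrite (@le_anti z c) ?eqxx // le_cz c_max.
Qed.

Lemma not_join_irreducible_of_join x y1 y2 :
  x \in S -> y1 \in S -> y2 \in S ->
  le y1 x -> y1 != x -> le y2 x -> y2 != x ->
  (forall z, z \in S -> le y1 z -> le y2 z -> le x z) ->
  ~~ join_irreducible S le x.
Proof.
move=> Sx S1 S2 le1 ne1 le2 ne2 x_join.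
have [z1 cov1 le_yz1] := exists_lower_cover Sx S1 le1 ne1.
have [z2 cov2 le_yz2] := exists_lower_cover Sx S2 le2 ne2.
rewrite /join_irreducible negb_and orbC; apply/orP; left.
suff : 1 < #|[set y | covers S le x y]| by case: #|_| => [|[]].
apply/card_gt1P; exists z1, z2; rewrite !inE cov1 cov2; split=> //.
have [Sz1 _ le_z1x ne_z1x] := covers_le_neq cov1.
apply: contra ne_z1x => /eqP eq_z12; apply/eqP/le_anti.
by rewrite le_z1x x_join // eq_z12.
Qed.

Lemma min_not_join_irreducible b : is_min S le b -> ~~ join_irreducible S le b.
Proof.
case=> Sb b_min; rewrite /join_irreducible negb_and orbC; apply/orP; left.
suff -> : [set y | covers S le b y] = set0 by rewrite cards0.
apply/setP=> y; rewrite !inE; apply/negP=> /covers_le_neq[Sy _ le_yb ne_yb].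
by move: ne_yb; rewrite (@le_anti y b) ?eqxx // le_yb b_min.
Qed.

Lemma meet_exists_of_joins b : is_min S le b ->
  (forall x y, x \in S -> y \in S -> exists j, is_join S le x y j) ->
  forall x y, x \in S -> y \in S -> exists m, is_meet S le x y m.
Proof.
case=> Sb b_min joins x y Sx Sy.
pose lower z := [&& z \in S, le z x & le z y].
have lower_b : lower b by rewrite /lower Sb !b_min.
have [m /and3P[Sm le_mx le_my] m_max] := arg_maxnP (fun z => #|down z|) lower_b.
exists m; split=> // z Sz le_zx le_zy.
have [j [Sj le_mj le_zj j_min]] := joins m z Sm Sz.
have lower_j : lower j by rewrite /lower Sj !j_min.
have [->|ne_mj] := eqVneq m j; first by [].
by move: (m_max j lower_j); rewrite /= leqNgt down_lt.
Qed.

End FinitePosets.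

Section Duality.
Variables (T : finType) (S : {set T}) (le : rel T).
Local Notation ge := (fun x y => le y x).

Lemma covers_dual x y : covers S ge x y = covers S le y x.
Proof.
rewrite /covers andbCA eq_sym; do 4!congr andb; apply: eq_forallb=> z.
by rewrite (andbCA (le z y)) (andbC (z != y)).
Qed.

Lemma meet_irreducible_dual x : meet_irreducible S le x = join_irreducible S ge x.
Proof.
by rewrite /meet_irreducible /join_irreducible; under eq_finset do rewrite -covers_dual.
Qed.

Hypotheses (le_refl : reflexive le) (le_anti : antisymmetric le)
  (le_trans : transitive le).

Let ge_refl : reflexive ge := le_refl.

Let ge_anti : antisymmetric ge.
Proof. by move=> x y; rewrite andbC => /le_anti. Qed.

Let ge_trans : transitive ge.
Proof. by move=> y x z le_yx le_zy; apply: le_trans le_zy le_yx. Qed.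

Lemma meet_irreducible_of_min_above x c :
  x \in S -> c \in S -> le x c -> x != c ->
  (forall y, y \in S -> le x y -> x != y -> le c y) ->
  meet_irreducible S le x.
Proof.
move=> Sx Sc le_xc ne_xc c_min; rewrite meet_irreducible_dual.
apply: (join_irreducible_of_max_below ge_anti Sx Sc) => // [|y Sy le_xy ne_xy].
  by rewrite eq_sym.
by apply: c_min; rewrite // eq_sym.
Qed.

Lemma not_meet_irreducible_of_meet x y1 y2 :
  x \in S -> y1 \in S -> y2 \in S ->
  le x y1 -> x != y1 -> le x y2 -> x != y2 ->
  (forall z, z \in S -> le z y1 -> le z y2 -> le z x) ->
  ~~ meet_irreducible S le x.
Proof.
move=> Sx S1 S2 le1 ne1 le2 ne2 x_meet; rewrite meet_irreducible_dual.
by apply: (not_join_irreducible_of_join ge_refl ge_anti ge_trans Sx S1 S2);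
  rewrite // eq_sym.
Qed.

Lemma max_not_meet_irreducible t : is_max S le t -> ~~ meet_irreducible S le t.
Proof. by rewrite meet_irreducible_dual; apply: min_not_join_irreducible. Qed.

End Duality.

Section Words.
Variable n : nat.
Implicit Types (u v y z : word n) (i j p q : 'I_n).

Definition letter u i : nat := u i.

Lemma letter_le2 u i : letter u i <= 2.
Proof. by rewrite -ltnS ltn_ord. Qed.

Lemma word_ext u v : (forall i, letter u i = letter v i) -> u = v.
Proof. by move=> eq_uv; apply/ffunP=> i; apply/val_inj/eq_uv. Qed.

Definition word_of (f : 'I_n -> nat) : word n := [ffun i => inord (f i)].

Lemma letter_word_of f i : f i <= 2 -> letter (word_of f) i = f i.
Proof. by move=> le_f2; rewrite /letter ffunE inordK. Qed.

Lemma wleP u v : reflect (forall i, letter u i <= letter v i) (wle u v).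
Proof. exact: forallP. Qed.

Lemma wle_refl : reflexive (@wle n).
Proof. by move=> u; apply/wleP. Qed.

Lemma wle_anti : antisymmetric (@wle n).
Proof.
move=> u v /andP[/wleP le_uv /wleP le_vu]; apply: word_ext => i.
by apply/eqP; rewrite eqn_leq le_uv le_vu.
Qed.

Lemma wle_trans : transitive (@wle n).
Proof.
move=> v u w /wleP le_uv /wleP le_vw; apply/wleP=> i.
exact: leq_trans (le_uv i) (le_vw i).
Qed.

Lemma triwordP u : reflect
  ((forall i, i = 0 :> nat -> letter u i <= 1) /\
   (forall i j, i < j -> letter u i = 0 -> letter u j != 1))
  (triword u).
Proof.
apply: (iffP andP) => [[/forallP first /forallP zero]|[first zero]]; split.
- move=> i i0; have := first i; rewrite -[val i]/(i : nat) i0 /=.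
  by have := letter_le2 u i; rewrite /letter; lia.
- by move=> i j lt_ij /eqP u0; have /forallP/(_ j) := zero i; rewrite lt_ij u0.
- apply/forallP=> i; apply/implyP=> /eqP/first.
  by apply: contraTneq; rewrite /letter => ->.
- apply/forallP=> i; apply/forallP=> j; apply/implyP=> /andP[lt_ij /eqP].
  exact: zero.
Qed.

Lemma mem_Tr u : (u \in Tr n) = triword u.
Proof. by rewrite inE. Qed.

Definition weight u := \sum_i letter u i.

Lemma weight_lt u v : wle u v -> u != v -> weight u < weight v.
Proof.
move=> /wleP le_uv ne_uv.
have [i lt_i] : exists i, letter u i < letter v i.
  apply/existsP; apply: contraNT ne_uv; rewrite negb_exists => /forallP ge_uv.
  apply/eqP/word_ext=> i; apply/eqP; rewrite eqn_leq le_uv.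
  by have := ge_uv i; rewrite -leqNgt.
rewrite /weight (bigD1 i) //= [ltnRHS](bigD1 i) //= -addSn.
by rewrite leq_add // leq_sum.
Qed.

Lemma weight_bump u v p : (forall i, letter v i = letter u i + (i == p)) ->
  weight v = (weight u).+1.
Proof.
move=> bump; rewrite /weight (eq_bigr _ (fun i _ => bump i)) big_split /=.
rewrite -addn1; congr (_ + _).
by rewrite (bigD1 p) //= eqxx big1 // => i /negbTE->.
Qed.

Lemma wle_bump u v p : (forall i, letter v i = letter u i + (i == p)) -> wle u v.
Proof. by move=> bump; apply/wleP=> i; rewrite bump leq_addr. Qed.

Definition wjoin u v := word_of (fun i => maxn (letter u i) (letter v i)).

Lemma letter_wjoin u v i : letter (wjoin u v) i = maxn (letter u i) (letter v i).
Proof. by rewrite letter_word_of // geq_max !letter_le2. Qed.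

Lemma triword_wjoin u v : triword u -> triword v -> triword (wjoin u v).
Proof.
move=> /triwordP[first_u zero_u] /triwordP[first_v zero_v].
apply/triwordP; split=> [i i0|i j lt_ij]; rewrite !letter_wjoin.
  by rewrite geq_max first_u ?first_v.
move=> /eqP; rewrite -leqn0 geq_max !leqn0 => /andP[/eqP u0 /eqP v0].
move: (zero_u i j lt_ij u0) (zero_v i j lt_ij v0).
have := letter_le2 u j; have := letter_le2 v j; lia.
Qed.

Lemma is_join_wjoin u v : u \in Tr n -> v \in Tr n ->
  is_join (Tr n) (@wle n) u v (wjoin u v).
Proof.
rewrite !mem_Tr => tri_u tri_v; split; rewrite ?mem_Tr ?triword_wjoin //.
- by apply/wleP=> i; rewrite letter_wjoin leq_maxl.
- by apply/wleP=> i; rewrite letter_wjoin leq_maxr.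
move=> w _ /wleP le_uw /wleP le_vw; apply/wleP=> i.
by rewrite letter_wjoin geq_max le_uw le_vw.
Qed.

Definition wbot := word_of (fun=> 0).

Lemma letter_wbot i : letter wbot i = 0.
Proof. exact: letter_word_of. Qed.

Definition max_letter i : nat := (0 < i).+1.

Definition wtop := word_of max_letter.

Lemma letter_wtop i : letter wtop i = max_letter i.
Proof. by rewrite letter_word_of // /max_letter; case: (0 < i). Qed.

Lemma triword_wbot : triword wbot.
Proof. by apply/triwordP; split=> *; rewrite letter_wbot. Qed.

Lemma triword_wtop : triword wtop.
Proof.
by apply/triwordP; split=> [i|i j lt_ij]; rewrite !letter_wtop /max_letter; lia.
Qed.

Lemma letter_le_max u i : triword u -> letter u i <= max_letter i.
Proof.
case/triwordP=> first _; rewrite /max_letter lt0n.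
by case: eqP => [/first|_]; last exact: letter_le2.
Qed.

Lemma is_min_wbot : is_min (Tr n) (@wle n) wbot.
Proof.
by split=> [|u _]; rewrite ?mem_Tr ?triword_wbot //; apply/wleP=> i; rewrite letter_wbot.
Qed.

Lemma is_max_wtop : is_max (Tr n) (@wle n) wtop.
Proof.
split=> [|u]; rewrite mem_Tr ?triword_wtop // => tri_u.
by apply/wleP=> i; rewrite letter_wtop letter_le_max.
Qed.

Lemma Tr_lattice : is_finite_lattice (Tr n) (@wle n).
Proof.
have joins u v : u \in Tr n -> v \in Tr n -> exists t, is_join (Tr n) (@wle n) u v t.
  by move=> Su Sv; exists (wjoin u v); apply: is_join_wjoin.
split; first exact: rel_partial_order wle_refl wle_anti wle_trans.
- by apply/set0Pn; exists wbot; case: is_min_wbot.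
- exact: joins.
move=> u v.
exact: (@meet_exists_of_joins _ (Tr n) _ wle_refl wle_anti wle_trans _ is_min_wbot joins).
Qed.

Lemma covers_bump u v p : triword u -> triword v ->
  (forall i, letter v i = letter u i + (i == p)) -> covers (Tr n) (@wle n) v u.
Proof.
move=> tri_u tri_v bump.
apply: (covers_of_weight_succ weight_lt); rewrite ?mem_Tr //.
  exact: wle_bump bump.
exact: weight_bump bump.
Qed.

(* The chain 0^n < 10^(n-1) < ... < 1^n < 121^(n-2) < ... < 12^(n-1), one letter
   raised at each step. *)
Definition chain_word k := word_of (fun i => (i < k) + ((0 < i) && (i + n <= k))).

Lemma letter_chain_word k i :
  letter (chain_word k) i = (i < k) + ((0 < i) && (i + n <= k)).
Proof. by rewrite letter_word_of //; case: (i < k); case: (_ && _). Qed.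

Lemma triword_chain_word k : triword (chain_word k).
Proof. by apply/triwordP; split=> [i|i j lt_ij]; rewrite !letter_chain_word; lia. Qed.

Lemma chain_word_bump k : k.+1 < n.*2 ->
  exists p, forall i, letter (chain_word k.+1) i = letter (chain_word k) i + (i == p).
Proof.
move=> lt_k; have lt_p : (if k < n then k else k.+1 - n) < n by case: ifP; lia.
exists (Ordinal lt_p) => i; rewrite !letter_chain_word -val_eqE /=.
by have := ltn_ord i; case: ifP; lia.
Qed.

Lemma chain_word0 : chain_word 0 = wbot.
Proof. by apply: word_ext => i; rewrite letter_chain_word letter_wbot; lia. Qed.

Lemma chain_word_top : 0 < n -> chain_word n.*2.-1 = wtop.
Proof.
move=> n_gt0; apply: word_ext => i; rewrite letter_chain_word letter_wtop /max_letter.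
by have := ltn_ord i; lia.
Qed.

Lemma weight_wbot : weight wbot = 0.
Proof. by rewrite /weight big1 // => i _; rewrite letter_wbot. Qed.

Lemma weight_wtop : 0 < n -> weight wtop = n.*2.-1.
Proof.
move=> n_gt0; rewrite /weight (bigD1 (Ordinal n_gt0)) //= letter_wtop.
rewrite (eq_bigr (fun=> 2)) => [|i ne_i0]; last first.
  by rewrite letter_wtop /max_letter lt0n -(inj_eq val_inj) in ne_i0 *; rewrite ne_i0.
by rewrite sum_nat_const cardC1 card_ord /max_letter /=; lia.
Qed.

Lemma longest_chain_Tr : 0 < n -> longest_chain_length (Tr n) (@wle n) n.*2.-1.
Proof.
move=> n_gt0; exists wbot, wtop; split; [exact: is_min_wbot | exact: is_max_wtop | |].
  exists [seq chain_word k | k <- iota 1 n.*2.-1]; rewrite size_map size_iota.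
  split=> //; apply/andP; split.
    rewrite -chain_word0 path_map; apply/(pathP 0); rewrite size_iota => k lt_k.
    rewrite -[0 :: _]/(iota 0 n.*2.-1.+1) !nth_iota; try lia.
    have [|p bump] := @chain_word_bump k; first by lia.
    exact: covers_bump (triword_chain_word _) (triword_chain_word _) bump.
  rewrite -chain_word0 last_map (last_nth 0) -[0 :: _]/(iota 0 n.*2.-1.+1).
  by rewrite size_iota nth_iota // add0n chain_word_top.
move=> s /(sat_chain_size_le weight_lt).
by rewrite weight_wbot weight_wtop.
Qed.

Definition set_letter u p (a : nat) :=
  word_of (fun i => if i == p then a else letter u i).

Lemma letter_set_letter u p a i : a <= 2 ->
  letter (set_letter u p a) i = if i == p then a else letter u i.
Proof. by move=> le_a2; rewrite letter_word_of //; case: ifP; rewrite ?letter_le2. Qed.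

Lemma eq_set_letter u v p : (forall i, i != p -> letter u i = letter v i) ->
  u = set_letter v p (letter u p).
Proof.
move=> eq_off; apply: word_ext => i; rewrite letter_set_letter ?letter_le2 //.
by case: eqP => [->|/eqP/eq_off].
Qed.

Lemma set_letter_inj u p q a b : a <= 2 -> b <= 2 -> a != letter u p ->
  set_letter u p a = set_letter u q b -> p = q /\ a = b.
Proof.
move=> le_a le_b ne_a eq_ab.
have := congr1 (letter^~ p) eq_ab; rewrite !letter_set_letter // eqxx.
by case: eqP => [<-|_ eq_a]; last by rewrite eq_a eqxx in ne_a.
Qed.

Lemma letter_set_letter_neq u p a i : i != p -> letter (set_letter u p a) i = letter u i.
Proof. by move=> /negbTE ne_ip; rewrite letter_word_of ne_ip ?letter_le2. Qed.

Lemma ub_two_set_letters u p q a b z : p != q ->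
  wle (set_letter u p a) z -> wle (set_letter u q b) z -> wle u z.
Proof.
move=> ne_pq /wleP le_pz /wleP le_qz; apply/wleP=> i.
case: (eqVneq i p) => [->|ne_ip]; last by rewrite -(letter_set_letter_neq u a ne_ip).
by rewrite -(letter_set_letter_neq u b ne_pq).
Qed.

Lemma lb_two_set_letters u p q a b z : p != q ->
  wle z (set_letter u p a) -> wle z (set_letter u q b) -> wle z u.
Proof.
move=> ne_pq /wleP le_zp /wleP le_zq; apply/wleP=> i.
case: (eqVneq i p) => [->|ne_ip]; last by rewrite -(letter_set_letter_neq u a ne_ip).
by rewrite -(letter_set_letter_neq u b ne_pq).
Qed.

Definition zero_before u p := [exists j : 'I_n, (j < p) && (letter u j == 0)].
Definition one_after u p := [exists j : 'I_n, (p < j) && (letter u j == 1)].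

Lemma triword_set_letter u p a : triword u -> a <= 2 ->
  (p = 0 :> nat -> a <= 1) -> (a = 1 -> ~~ zero_before u p) ->
  (a = 0 -> ~~ one_after u p) -> triword (set_letter u p a).
Proof.
move=> /triwordP[first zero] le_a first_a one_a zero_a.
apply/triwordP; split=> [i i0|i j lt_ij]; rewrite !letter_set_letter //.
  by case: eqP => [eq_ip|_]; [apply: first_a; rewrite -eq_ip | apply: first].
case: (eqVneq i p) lt_ij => [-> lt_pj a0|_ lt_ij u0].
  rewrite ifN; last by apply: contraTneq lt_pj => ->; rewrite ltnn.
  move: (zero_a a0); apply: contraNneq => u1.
  by apply/existsP; exists j; rewrite lt_pj u1.
case: (eqVneq j p) lt_ij => [-> lt_ip|_ lt_ij]; last exact: zero lt_ij u0.
by apply/eqP=> /one_a/negP; apply; apply/existsP; exists i; rewrite lt_ip u0.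
Qed.

Lemma set_letter_le u p a : a <= letter u p -> wle (set_letter u p a) u.
Proof.
move=> le_a; have le_a2 := leq_trans le_a (letter_le2 u p).
by apply/wleP=> i; rewrite letter_set_letter //; case: eqP => [->|].
Qed.

Lemma set_letter_ge u p a : letter u p <= a <= 2 -> wle u (set_letter u p a).
Proof.
case/andP=> le_a le_a2.
by apply/wleP=> i; rewrite letter_set_letter //; case: eqP => [->|].
Qed.

Lemma set_letter_neq u p a : a <= 2 -> a != letter u p -> set_letter u p a != u.
Proof.
move=> le_a2; apply: contraNneq => /(congr1 (letter^~ p)).
by rewrite letter_set_letter // eqxx => ->.
Qed.

Definition lowerable u p :=
  (letter u p == 2) || (letter u p == 1) && ~~ one_after u p.

(* A 2 drops to 1 if no 0 precedes it, and to 0 otherwise; a lowerable 1 drops to 0. *)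
Definition lower u p := set_letter u p ((letter u p == 2) && ~~ zero_before u p).

Lemma letter_lower_lt u p : lowerable u p ->
  (letter u p == 2) && ~~ zero_before u p < letter u p.
Proof. by case/orP=> [/eqP->|/andP[/eqP-> _]] //; case: (~~ _). Qed.

Lemma lower_le u p : lowerable u p -> wle (lower u p) u.
Proof. by move/letter_lower_lt/ltnW/set_letter_le. Qed.

Lemma lower_neq u p : lowerable u p -> lower u p != u.
Proof.
move/letter_lower_lt=> lt_p; apply: set_letter_neq; last by rewrite ltn_eqF.
by case: (_ && _).
Qed.

Lemma triword_lower u p : triword u -> lowerable u p -> triword (lower u p).
Proof.
move=> tri_u low_p; have /triwordP[_ zero] := tri_u.
apply: triword_set_letter => //; try by case: (_ && _).
  by case: (~~ _); rewrite ?andbF.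
case/orP: low_p => [/eqP-> /=|/andP[_ //]].
case: (boolP (zero_before u p)) => // /existsP[j /andP[lt_jp /eqP u0]] _.
apply/existsP=> -[k /andP[lt_pk /eqP u1]].
by have := zero j k (ltn_trans lt_jp lt_pk) u0; rewrite u1.
Qed.

Definition ones_prefix k := word_of (fun i => i < k).

Lemma letter_ones_prefix k i : letter (ones_prefix k) i = (i < k).
Proof. by rewrite letter_word_of //; case: (i < k). Qed.

Lemma triword_ones_prefix k : triword (ones_prefix k).
Proof.
by apply/triwordP; split=> [i|i j lt_ij]; rewrite !letter_ones_prefix; lia.
Qed.

Lemma ones_prefix_ji k : k < n -> join_irreducible (Tr n) (@wle n) (ones_prefix k.+1).
Proof.
move=> lt_kn; pose K := Ordinal lt_kn.
apply: (join_irreducible_of_max_below wle_anti (c := ones_prefix k));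
  rewrite ?mem_Tr ?triword_ones_prefix //.
- by apply/wleP=> i; rewrite !letter_ones_prefix; lia.
- by apply/eqP=> /(congr1 (letter^~ K)); rewrite !letter_ones_prefix /= ltnn ltnSn.
move=> y; rewrite mem_Tr => /triwordP[_ zero] /wleP le_y ne_y.
have yK : letter y K = 0.
  apply: contraNeq ne_y => yK_ne0; apply/eqP/word_ext => i.
  have := le_y i; have := le_y K; rewrite !letter_ones_prefix /=.
  case: (eqVneq i K) => [->|]; first lia.
  rewrite -val_eqE /= => ne_ik; case: (ltnP i k) => [lt_ik|]; last lia.
  by have := zero i K lt_ik; lia.
apply/wleP=> i; have := le_y i; rewrite !letter_ones_prefix.
by case: (eqVneq i K) => [->|/negP]; rewrite ?yK // -val_eqE /=; lia.
Qed.

Definition lone_two p := set_letter wbot p 2.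

Lemma letter_lone_two p i : letter (lone_two p) i = if i == p then 2 else 0.
Proof. by rewrite letter_set_letter // letter_wbot. Qed.

Lemma triword_lone_two p : 0 < p -> triword (lone_two p).
Proof. by move=> p_gt0; apply: triword_set_letter triword_wbot _ _ _ _ => // p0; lia. Qed.

Lemma lone_two_ji p : 0 < p -> join_irreducible (Tr n) (@wle n) (lone_two p).
Proof.
move=> p_gt0; pose i0 := Ordinal (ltn_trans p_gt0 (ltn_ord p)).
apply: (join_irreducible_of_max_below wle_anti (c := wbot));
  rewrite ?mem_Tr ?triword_lone_two ?triword_wbot //.
- by case: is_min_wbot => _; apply; rewrite mem_Tr triword_lone_two.
- by apply/eqP=> /(congr1 (letter^~ p)); rewrite letter_lone_two letter_wbot eqxx.
move=> y; rewrite mem_Tr => /triwordP[_ zero] /wleP le_y ne_y.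
have y_off i : i != p -> letter y i = 0.
  by move=> ne_ip; have := le_y i; rewrite letter_lone_two (negbTE ne_ip); lia.
have yp : letter y p = 0.
  have ne_i0p : i0 != p by rewrite -val_eqE /= neq_ltn p_gt0.
  have := zero i0 p p_gt0 (y_off i0 ne_i0p); have := le_y p.
  rewrite letter_lone_two eqxx; case: (eqVneq (letter y p) 2) => [y2|]; last lia.
  case/eqP: ne_y; apply: word_ext => i; rewrite letter_lone_two.
  by case: (eqVneq i p) => [->|/y_off].
apply/wleP=> i; rewrite letter_wbot; case: (eqVneq i p) => [->|/y_off->]; by rewrite ?yp.
Qed.

(* Both families of irreducibles are indexed by the pairs (p, b) except
   (first position, true): lone_two is not a triword at the first position, and
   raising the first letter to 1 gives the top. *)
Definition irr_index := [set pb : 'I_n * bool | ~~ (pb.2 && (pb.1 == 0 :> nat))].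

Lemma card_irr_index : 0 < n -> #|irr_index| = n.*2.-1.
Proof.
move=> n_gt0; have -> : irr_index = [set~ (Ordinal n_gt0, true)].
  by apply/setP=> -[p [|]]; rewrite !inE xpair_eqE -val_eqE /= ?andbT ?andbF.
by rewrite cardsC1 card_prod card_ord card_bool muln2.
Qed.

Definition ji_word (pb : 'I_n * bool) :=
  if pb.2 then lone_two pb.1 else ones_prefix pb.1.+1.

Lemma ji_word_ji pb : pb \in irr_index -> join_irreducible (Tr n) (@wle n) (ji_word pb).
Proof.
case: pb => p [] /=; rewrite inE /= => p_irr; last exact: ones_prefix_ji.
by apply: lone_two_ji; rewrite lt0n.
Qed.

Lemma ji_word_inj : {in irr_index &, injective ji_word}.
Proof.
have lone_two_prefix p q : lone_two p != ones_prefix q.+1.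
  apply/eqP=> /(congr1 (letter^~ p)); rewrite letter_lone_two letter_ones_prefix eqxx.
  by case: (_ < _).
move=> [p [|]] [q [|]] _ _; rewrite /ji_word /= => eq_pq.
- have ne_2 : 2 != letter wbot p by rewrite letter_wbot.
  by have [-> _] := set_letter_inj (leqnn 2) (leqnn 2) ne_2 eq_pq.
- by move: (lone_two_prefix p q); rewrite eq_pq => /eqP.
- by move: (lone_two_prefix q p); rewrite eq_pq => /eqP.
have := congr1 (letter^~ p) eq_pq; have := congr1 (letter^~ q) eq_pq.
rewrite !letter_ones_prefix => eq_q eq_p.
suff -> : p = q by [].
by apply: val_inj => /=; lia.
Qed.

Lemma exists_last_one u p :
  letter u p = 1 -> exists2 q, letter u q = 1 & ~~ one_after u q.
Proof.
move=> /eqP u1.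
have [q /eqP q1 q_max] := @arg_maxnP _ p (fun i => letter u i == 1) val u1.
exists q => //; apply/existsP=> -[j /andP[lt_qj /q_max]] /=.
by rewrite leqNgt lt_qj.
Qed.

Lemma ji_classification u : triword u ->
  (forall p q, lowerable u p -> lowerable u q -> p = q) ->
  u = wbot \/ exists2 pb, pb \in irr_index & u = ji_word pb.
Proof.
move=> tri_u low_uniq; have /triwordP[first zero] := tri_u.
have low_two p : letter u p = 2 -> lowerable u p by rewrite /lowerable => ->.
have low_last p : letter u p = 1 -> ~~ one_after u p -> lowerable u p.
  by rewrite /lowerable => -> ->.
case: (pickP (fun p => letter u p == 2)) => [p /eqP u2|no_two].
  right; exists (p, true).
    by rewrite inE /=; apply/eqP=> /first; rewrite u2.
  rewrite /ji_word /lone_two /= -u2; apply: eq_set_letter => i ne_ip.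
  have not_two : letter u i != 2.
    by apply: contraNneq ne_ip => /low_two/low_uniq/(_ (low_two p u2))->.
  have not_one : letter u i != 1.
    apply/eqP=> /exists_last_one[q q1 /(low_last q q1)/low_uniq].
    by move=> /(_ p (low_two p u2)) eq_qp; move: q1; rewrite eq_qp u2.
  by rewrite letter_wbot; have := letter_le2 u i; lia.
case: (pickP (fun p => letter u p == 1)) => [p /eqP/exists_last_one[q q1 no_one]|no_one].
  right; exists (q, false); first by rewrite inE.
  apply: word_ext => i; rewrite /ji_word /= letter_ones_prefix.
  have /negbT := no_two i; have := letter_le2 u i.
  case: (ltngtP i q) => [lt_iq|gt_iq|eq_iq].
  - by have := zero i q lt_iq; rewrite q1; lia.
  - by move: no_one => /existsPn/(_ i); rewrite gt_iq /=; lia.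
  - by rewrite (_ : i = q) ?q1 ?ltnSn //; apply: val_inj.
left; apply: word_ext => i; rewrite letter_wbot.
by have /negbT := no_two i; have /negbT := no_one i; have := letter_le2 u i; lia.
Qed.

Lemma join_irreducibles_Tr :
  [set u | join_irreducible (Tr n) (@wle n) u] = ji_word @: irr_index.
Proof.
apply/setP=> u; rewrite inE; apply/idP/imsetP=> [ji_u|[pb pb_irr ->]]; last first.
  exact: ji_word_ji.
have Su : u \in Tr n by case/andP: ji_u.
have tri_u : triword u by rewrite -mem_Tr.
have low_uniq p q : lowerable u p -> lowerable u q -> p = q.
  move=> low_p low_q; apply/eqP; apply: contraTT ji_u => ne_pq.
  apply: (not_join_irreducible_of_join wle_refl wle_anti wle_trans Su
           (y1 := lower u p) (y2 := lower u q));
    rewrite ?mem_Tr; do ?[exact: triword_lower | exact: lower_le | exact: lower_neq].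
  by move=> z _; apply: ub_two_set_letters.
have [u_bot|[pb pb_irr ->]] := ji_classification tri_u low_uniq; last by exists pb.
by move: ji_u; rewrite u_bot (negbTE (min_not_join_irreducible wle_anti is_min_wbot)).
Qed.

Definition raisable u p := letter u p < max_letter p.

Definition raise u p :=
  set_letter u p (if (letter u p == 0) && ~~ zero_before u p then 1 else 2).

Lemma letter_raise_gt u p : raisable u p ->
  letter u p < if (letter u p == 0) && ~~ zero_before u p then 1 else 2.
Proof.
rewrite /raisable /max_letter => lt_max.
by case: (zero_before u p); case: (eqVneq (letter u p) 0) => [->|] //=; lia.
Qed.

Lemma raise_ge u p : raisable u p -> wle u (raise u p).
Proof.
by move/letter_raise_gt/ltnW=> le_p; apply: set_letter_ge; rewrite le_p; case: ifP.
Qed.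

Lemma raise_neq u p : raisable u p -> u != raise u p.
Proof.
move/letter_raise_gt=> gt_p; rewrite eq_sym.
by apply: set_letter_neq; [case: ifP | rewrite gtn_eqF].
Qed.

Lemma triword_raise u p : triword u -> raisable u p -> triword (raise u p).
Proof.
move=> tri_u; rewrite /raisable /max_letter => lt_max.
apply: triword_set_letter => //; first by case: ifP.
- move=> p0; have zb : ~~ zero_before u p by apply/existsPn=> j; rewrite p0.
  have u0 : letter u p = 0 by move: lt_max; rewrite p0; lia.
  by rewrite u0 zb.
- by case: ifP => [/andP[_ ->]|].
by case: ifP.
Qed.

Definition mi_word (pb : 'I_n * bool) := set_letter wtop pb.1 pb.2.

Lemma irr_index_lt_max p (b : bool) : (p, b) \in irr_index -> b < max_letter p.
Proof. by rewrite inE /max_letter lt0n; case: b; case: (_ == _). Qed.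

Lemma triword_set_letter_wtop p a : a <= max_letter p -> triword (set_letter wtop p a).
Proof.
rewrite /max_letter => lt_a; apply: triword_set_letter triword_wtop _ _ _ _; try lia.
- by move=> _; apply/existsPn=> j; rewrite letter_wtop andbF.
move=> _; apply/existsPn=> j; apply/andP=> -[lt_pj].
by rewrite letter_wtop /max_letter (leq_ltn_trans (leq0n p) lt_pj).
Qed.

Lemma mi_word_mi pb : pb \in irr_index -> meet_irreducible (Tr n) (@wle n) (mi_word pb).
Proof.
case: pb => p b /irr_index_lt_max lt_b; rewrite /mi_word /=.
have le_Sb2 : b.+1 <= 2 by rewrite (leq_trans lt_b) // /max_letter; case: (0 < p).
have le_b2 : b <= 2 by rewrite ltnW.
have S_b : set_letter wtop p b \in Tr n by rewrite mem_Tr triword_set_letter_wtop // ltnW.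
have S_c : set_letter wtop p b.+1 \in Tr n by rewrite mem_Tr triword_set_letter_wtop.
apply: (meet_irreducible_of_min_above wle_anti S_b S_c).
- by apply/wleP=> i; rewrite !letter_set_letter //; case: (i == p).
- apply/eqP=> /(congr1 (letter^~ p)).
  by rewrite !letter_set_letter // eqxx; lia.
move=> y; rewrite mem_Tr => tri_y /wleP le_by ne_by; apply/wleP=> i.
have y_off j : j != p -> letter y j = max_letter j.
  move=> ne_jp; apply/eqP; rewrite eqn_leq letter_le_max //=.
  by have := le_by j; rewrite letter_set_letter_neq // letter_wtop.
rewrite letter_set_letter //; case: (eqVneq i p) => [->|/y_off->]; last first.
  by rewrite letter_wtop.
have := le_by p; rewrite letter_set_letter // eqxx leq_eqVlt => /orP[/eqP b_yp|//].
case/eqP: ne_by; rewrite b_yp; apply/esym/eq_set_letter=> j /y_off->.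
by rewrite letter_wtop.
Qed.

Lemma mi_word_inj : {in irr_index &, injective mi_word}.
Proof.
move=> [p b] [q c] /irr_index_lt_max lt_b _; rewrite /mi_word /=.
have ne_b : b != letter wtop p :> nat by rewrite letter_wtop ltn_eqF.
case/(set_letter_inj (leqW (leq_b1 b)) (leqW (leq_b1 c)) ne_b) => -> /eqP.
by case: (b) c => [] [].
Qed.

Lemma mi_classification u : triword u ->
  (forall p q, raisable u p -> raisable u q -> p = q) ->
  u = wtop \/ exists2 pb, pb \in irr_index & u = mi_word pb.
Proof.
move=> tri_u rais_uniq.
have full_of_not_raisable i : ~~ raisable u i -> letter u i = max_letter i.
  by move=> not_rais; apply/eqP; rewrite eqn_leq letter_le_max // leqNgt.
case: (pickP (raisable u)) => [p rais_p|none]; last first.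
  left; apply: word_ext => i; rewrite letter_wtop full_of_not_raisable //.
  by rewrite none.
right; exists (p, letter u p == 1).
  by move: rais_p; rewrite inE /raisable /max_letter /=; lia.
rewrite [LHS](@eq_set_letter u wtop p) => [|i ne_ip]; last first.
  rewrite letter_wtop full_of_not_raisable //.
  by apply: contra ne_ip => rais_i; rewrite (rais_uniq i p).
rewrite /mi_word /=; congr set_letter.
by move: rais_p; rewrite /raisable /max_letter; lia.
Qed.

Lemma meet_irreducibles_Tr :
  [set u | meet_irreducible (Tr n) (@wle n) u] = mi_word @: irr_index.
Proof.
apply/setP=> u; rewrite inE; apply/idP/imsetP=> [mi_u|[pb pb_irr ->]]; last first.
  exact: mi_word_mi.
have Su : u \in Tr n by case/andP: mi_u.
have tri_u : triword u by rewrite -mem_Tr.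
have rais_uniq p q : raisable u p -> raisable u q -> p = q.
  move=> rais_p rais_q; apply/eqP; apply: contraTT mi_u => ne_pq.
  apply: (not_meet_irreducible_of_meet wle_refl wle_anti wle_trans Su
           (y1 := raise u p) (y2 := raise u q));
    rewrite ?mem_Tr; do ?[exact: triword_raise | exact: raise_ge | exact: raise_neq].
  by move=> z _; apply: lb_two_set_letters.
have [u_top|[pb pb_irr ->]] := mi_classification tri_u rais_uniq; last by exists pb.
by move: mi_u; rewrite u_top (negbTE (max_not_meet_irreducible wle_anti is_max_wtop)).
Qed.

End Words.

Theorem proposition3p2 (n : nat) : 1 <= n -> extremal (Tr n) (@wle n).
Proof.
move=> n_gt0; split; first exact: Tr_lattice.
exists n.*2.-1; split; first exact: longest_chain_Tr.
  by rewrite join_irreducibles_Tr card_in_imset ?card_irr_index //; exact: ji_word_inj.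
by rewrite meet_irreducibles_Tr card_in_imset ?card_irr_index //; exact: mi_word_inj.
Qed.
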